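(* Let $g$ satisfy Assumption B, let $L>0$ with $1/L>s_0$, and let $u,z\in\mathbb{R}$ with $u\in\mathcal{G}_L(z)$. Then: if $u>0$, $u\ge\max\big(\sigma(1/L),\ \tfrac{Lq_0(1/L)-z}{L}\big)$; if $u<0$, $u\le\min\big(-\sigma(1/L),\ -\tfrac{Lq_0(1/L)+z}{L}\big)$; if $u=0$, $|z|\le Lq_0(1/L)$. Here $\sigma(1/L)>0$ and $q_0(1/L)>0$.
   Context: Assumption B on $g:\mathbb{R}\to\mathbb{R}\cup\{+\infty\}$: (B1) lsc, symmetric, $g(0)=0$; (B2) $g(u)<\infty$ for some $u\ne0$; (B3) one of (B3a) $g$ twice differentiable on some $(0,\epsilon)$, $\limsup_{u\searrow0}g''(u)\in(-\infty,0)$; (B3b) same differentiability, $\lim_{u\searrow0}g''(u)=-\infty$; (B3c) $\liminf_{u\searrow0}g(u)>0$; (B4) $g\ge0$. $\operatorname{prox}_{sg}(q):=\operatorname{argmin}_{u\in\mathbb{R}}(\tfrac12|u-q|^2+sg(u))$. $s_0:=0$ if (B3b) or (B3c) holds, otherwise $s_0:=-1/\limsup_{u\searrow0}g''(u)$. For $s>0$: $\sigma(s):=\inf\{|u|:\ u\ne0,\ u\in\operatorname{prox}_{sg}(q)\text{ for some }q\}$ and $q_0(s):=\sup\{q\ge0:\ q|u|\le\tfrac12u^2+sg(u)\ \forall u\in\mathbb{R}\}$. The set-valued map $\mathcal{G}_L:\mathbb{R}\rightrightarrows\mathbb{R}$ is defined by: $u\in\mathcal{G}_L(z)$ iff $u$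 is a global minimizer of $v\mapsto -zv+\frac L2(v-u)^2+g(v)$ over $v\in\mathbb{R}$. *)

From Stdlib Require Import Reals ClassicalEpsilon.
From Coquelicot Require Import Coquelicot.
Open Scope R_scope.

Definition Rbar_max2 (x y : Rbar) : Rbar := if Rbar_lt_dec x y then y else x.
Definition Rbar_min2 (x y : Rbar) : Rbar := if Rbar_lt_dec x y then x else y.

(* real part of g : R -> R U {+oo} (used where g is finite) *)
Definition greal (g : R -> Rbar) : R -> R := fun u => real (g u).

Definition g2 (g : R -> Rbar) : R -> R := Derive_n (greal g) 2.

Definition limsup_right0 (f : R -> R) : Rbar :=
  Rbar_glb (fun y => exists d, 0 < d /\
    y = Rbar_lub (fun v => exists u, 0 < u < d /\ v = Finite (f u))).

Definition liminf_right0 (f : R -> Rbar) : Rbar :=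
  Rbar_lub (fun y => exists d, 0 < d /\
    y = Rbar_glb (fun v => exists u, 0 < u < d /\ v = f u)).

Definition lsc (g : R -> Rbar) : Prop :=
  forall (x M : R), Rbar_lt (Finite M) (g x) ->
    locally x (fun y => Rbar_lt (Finite M) (g y)).

Definition twice_diff_near0 (g : R -> Rbar) : Prop :=
  exists eps, 0 < eps /\ forall u, 0 < u < eps ->
    is_finite (g u) /\ ex_derive (greal g) u /\ ex_derive (Derive (greal g)) u.

Definition B1 (g : R -> Rbar) : Prop :=
  lsc g /\ (forall u, g (- u) = g u) /\ g 0 = Finite 0.
Definition B2 (g : R -> Rbar) : Prop := exists u, u <> 0 /\ is_finite (g u).
Definition B3a (g : R -> Rbar) : Prop :=
  twice_diff_near0 g /\ exists l : R, limsup_right0 (g2 g) = Finite l /\ l < 0.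
Definition B3b (g : R -> Rbar) : Prop :=
  twice_diff_near0 g /\ filterlim (g2 g) (at_right 0) (Rbar_locally m_infty).
Definition B3c (g : R -> Rbar) : Prop := Rbar_lt (Finite 0) (liminf_right0 g).
Definition B4 (g : R -> Rbar) : Prop := forall u, Rbar_le (Finite 0) (g u).

Definition AssumptionB (g : R -> Rbar) : Prop :=
  B1 g /\ B2 g /\ (B3a g \/ B3b g \/ B3c g) /\ B4 g.

Definition s0 (g : R -> Rbar) : R :=
  if excluded_middle_informative (B3b g \/ B3c g) then 0
  else - / real (limsup_right0 (g2 g)).

Definition prox_obj (g : R -> Rbar) (s q u : R) : Rbar :=
  Rbar_plus (Finite (/2 * (u - q) ^ 2)) (Rbar_mult (Finite s) (g u)).
Definition in_prox (g : R -> Rbar) (s q u : R) : Prop :=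
  forall v, Rbar_le (prox_obj g s q u) (prox_obj g s q v).

Definition sigma_g (g : R -> Rbar) (s : R) : Rbar :=
  Rbar_glb (fun y => exists u q, u <> 0 /\ in_prox g s q u /\ y = Finite (Rabs u)).

Definition q0_g (g : R -> Rbar) (s : R) : Rbar :=
  Rbar_lub (fun y => exists q, 0 <= q /\ y = Finite q /\
    forall u, Rbar_le (Finite (q * Rabs u))
                      (Rbar_plus (Finite (/2 * u ^ 2)) (Rbar_mult (Finite s) (g u)))).

Definition GL_obj (g : R -> Rbar) (L z u v : R) : Rbar :=
  Rbar_plus (Finite (- z * v + L / 2 * (v - u) ^ 2)) (g v).
Definition in_GL (g : R -> Rbar) (L z u : R) : Prop :=
  forall v, Rbar_le (GL_obj g L z u u) (GL_obj g L z u v).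

(** Write [s = 1/L].  Expanding the square shows that [u] minimizes
    [v |-> -z v + L/2 (v-u)^2 + g(v)] iff [u] is a proximal point of [s g]
    for the input [q = u + s z] (GL_in_prox).  The three conclusions are
    then facts about proximal points: [sigma(s) <= |u|] by definition; for
    [u > 0], comparing the proximal objective at [u] and at [0] shows
    [q0(s) <= q] (q0_le_prox_input), and [u < 0] follows by symmetry of
    [g]; for [u = 0], comparing with [v] and [-v] shows that [|q|] is
    admissible in the supremum defining [q0(s)] (q0_ge_prox_input_at0).

    Positivity of [sigma(s)] and [q0(s)] amounts to a gap around 0 for the
    nonzero proximal points (prox_gap) and a positive admissible [q]
    (q0_admissible).  Under Assumption B with [s > s0], either
    [g'' < -1/s] on some (0,d) -- from (B3a) or (B3b) -- so that the
    proximal objective is strictly concave there, or [g >= c > 0] on some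
    (0,d) -- from (B3c).
*)

From Stdlib Require Import Reals Lra Classical ClassicalEpsilon.
From Coquelicot Require Import Coquelicot.
Open Scope R_scope.

Lemma Rbar_glb_le_elem (E : Rbar -> Prop) (x : Rbar) : E x -> Rbar_le (Rbar_glb E) x.
Proof. intros Hx; unfold Rbar_glb; destruct (Rbar_ex_glb E) as [l Hl]; simpl; now apply Hl. Qed.

Lemma Rbar_le_glb (E : Rbar -> Prop) (b : Rbar) :
  (forall x, E x -> Rbar_le b x) -> Rbar_le b (Rbar_glb E).
Proof. intros Hb; unfold Rbar_glb; destruct (Rbar_ex_glb E) as [l Hl]; simpl; now apply Hl. Qed.

Lemma Rbar_le_lub_elem (E : Rbar -> Prop) (x : Rbar) : E x -> Rbar_le x (Rbar_lub E).
Proof. intros Hx; unfold Rbar_lub; destruct (Rbar_ex_lub E) as [l Hl]; simpl; now apply Hl. Qed.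

Lemma Rbar_lub_le (E : Rbar -> Prop) (b : Rbar) :
  (forall x, E x -> Rbar_le x b) -> Rbar_le (Rbar_lub E) b.
Proof. intros Hb; unfold Rbar_lub; destruct (Rbar_ex_lub E) as [l Hl]; simpl; now apply Hl. Qed.

Lemma Rbar_lt_lub_witness (E : Rbar -> Prop) (b : Rbar) :
  Rbar_lt b (Rbar_lub E) -> exists y, E y /\ Rbar_lt b y.
Proof.
  intros Hlt; apply NNPP; intros Hnone.
  apply (Rbar_lt_not_le _ _ Hlt), Rbar_lub_le; intros y Hy.
  apply Rbar_not_lt_le; intros Hby; apply Hnone; now exists y.
Qed.

Lemma Rbar_glb_lt_witness (E : Rbar -> Prop) (b : Rbar) :
  Rbar_lt (Rbar_glb E) b -> exists y, E y /\ Rbar_lt y b.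
Proof.
  intros Hlt; apply NNPP; intros Hnone.
  apply (Rbar_lt_not_le _ _ Hlt), Rbar_le_glb; intros y Hy.
  apply Rbar_not_lt_le; intros Hyb; apply Hnone; now exists y.
Qed.

Lemma Rbar_mult_pos_pinfty (s : R) : 0 < s -> Rbar_mult (Finite s) p_infty = p_infty.
Proof.
  intros Hs; unfold Rbar_mult, Rbar_mult'.
  destruct (Rle_dec 0 s) as [H|H]; [|lra].
  destruct (Rle_lt_or_eq_dec 0 s H); [reflexivity|lra].
Qed.

Lemma Rbar_max2_le (x y c : Rbar) : Rbar_le x c -> Rbar_le y c -> Rbar_le (Rbar_max2 x y) c.
Proof. intros Hx Hy; unfold Rbar_max2; now destruct (Rbar_lt_dec x y). Qed.

Lemma Rbar_le_min2 (x y c : Rbar) : Rbar_le c x -> Rbar_le c y -> Rbar_le c (Rbar_min2 x y).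
Proof. intros Hx Hy; unfold Rbar_min2; now destruct (Rbar_lt_dec x y). Qed.

Definition strictly_concave_on (F F1 F2 : R -> R) (a b : R) : Prop :=
  forall v, a < v < b -> is_derive F v (F1 v) /\ is_derive F1 v (F2 v) /\ F2 v < 0.

Lemma mvt_open_interval (G G1 : R -> R) (a b x y : R) :
  (forall v, a < v < b -> is_derive G v (G1 v)) -> a < x < b -> a < y < b ->
  exists c, a < c < b /\ (y - x) * (c - x) >= 0 /\ G y - G x = G1 c * (y - x).
Proof.
  intros HG Hx Hy.
  assert (Hsub : forall v, Rmin x y <= v <= Rmax x y -> a < v < b).
  { intros v [Hv1 Hv2]; split.
    - eapply Rlt_le_trans; [apply Rmin_glb_lt; [apply Hx|apply Hy]|exact Hv1].
    - eapply Rle_lt_trans; [exact Hv2|]; apply Rmax_lub_lt; [apply Hx|apply Hy]. }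
  destruct (MVT_gen G x y G1) as [c [Hc Heq]].
  - intros v Hv; apply HG, Hsub; lra.
  - intros v Hv; apply continuity_pt_filterlim.
    apply (ex_derive_continuous (K := R_AbsRing) (V := R_NormedModule) G v).
    eexists; apply HG, Hsub, Hv.
  - exists c; split; [now apply Hsub|split; [|exact Heq]].
    destruct (Rle_dec x y) as [Hxy|Hxy].
    + rewrite Rmin_left, Rmax_right in Hc by lra; nra.
    + rewrite Rmin_right, Rmax_left in Hc by lra; nra.
Qed.

Section StrictlyConcave.

Variables (F F1 F2 : R -> R) (a b : R).
Hypothesis concave : strictly_concave_on F F1 F2 a b.

Lemma concave_deriv_decr (x y : R) : a < x -> x < y -> y < b -> F1 y < F1 x.
Proof.
  intros Hx Hxy Hy.
  destruct (mvt_open_interval F1 F2 a b x y) as [c [Hc [_ Heq]]]; try lra.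
  - intros v Hv; apply concave, Hv.
  - assert (F2 c < 0) by apply concave, Hc. nra.
Qed.

Lemma concave_tangent (x y : R) : a < x < b -> a < y < b ->
  F y <= F x + F1 x * (y - x).
Proof.
  intros Hx Hy.
  destruct (mvt_open_interval F F1 a b x y) as [c [Hc [Hside Heq]]]; auto.
  { intros v Hv; apply concave, Hv. }
  assert (Hcx : (F1 c - F1 x) * (y - x) <= 0).
  { destruct (Rtotal_order c x) as [Hlt|[Heq'|Hgt]].
    - assert (F1 x < F1 c) by (apply concave_deriv_decr; lra). nra.
    - subst; lra.
    - assert (F1 c < F1 x) by (apply concave_deriv_decr; lra). nra. }
  lra.
Qed.

(* Strictness: compare with the tangent at the midpoint of [x] and [y]. *)
Lemma concave_tangent_strict (x y : R) : a < x < b -> a < y < b -> x <> y ->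
  F y < F x + F1 x * (y - x).
Proof.
  intros Hx Hy Hxy.
  set (m := (x + y) / 2).
  assert (Hm : a < m < b) by (unfold m; lra).
  assert (Hym := concave_tangent m y Hm Hy).
  assert (Hmx := concave_tangent x m Hx Hm).
  assert (Hslope : (F1 m - F1 x) * (y - x) < 0).
  { destruct (Rtotal_order x y) as [Hlt|[Heq|Hgt]]; [|contradiction|].
    - assert (F1 m < F1 x) by (apply concave_deriv_decr; unfold m in *; lra). nra.
    - assert (F1 x < F1 m) by (apply concave_deriv_decr; unfold m in *; lra). nra. }
  replace (y - m) with ((y - x) / 2) in Hym by (unfold m; field).
  replace (m - x) with ((y - x) / 2) in Hmx by (unfold m; field).
  lra.
Qed.

Lemma concave_no_interior_min (u : R) : a < u < b ->
  ~ (forall t, a < t < b -> F u <= F t).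
Proof.
  intros Hu Hmin.
  set (h := Rmin (u - a) (b - u) / 2).
  assert (Hh : 0 < h /\ h < u - a /\ h < b - u).
  { assert (0 < Rmin (u - a) (b - u)) by (apply Rmin_pos; lra).
    assert (Hl := Rmin_l (u - a) (b - u)); assert (Hr := Rmin_r (u - a) (b - u)).
    unfold h; lra. }
  assert (Hright := concave_tangent_strict u (u + h) Hu ltac:(lra) ltac:(lra)).
  assert (Hleft := concave_tangent_strict u (u - h) Hu ltac:(lra) ltac:(lra)).
  assert (F u <= F (u + h)) by (apply Hmin; lra).
  assert (F u <= F (u - h)) by (apply Hmin; lra).
  lra.
Qed.

End StrictlyConcave.

Lemma concave_nonneg_chord (F F1 F2 : R -> R) (b u A : R) :
  strictly_concave_on F F1 F2 0 b -> (forall v, 0 < v < b -> 0 <= F v) ->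
  0 < u -> u < A -> A < b -> u * F A <= 2 * A * F u.
Proof.
  intros Hconc Hpos Hu HuA HA.
  assert (HtanA := concave_tangent F F1 F2 0 b Hconc u A ltac:(lra) ltac:(lra)).
  assert (Htan0 := concave_tangent F F1 F2 0 b Hconc u (u / 2) ltac:(lra) ltac:(lra)).
  assert (Hhalf : 0 <= F (u / 2)) by (apply Hpos; lra).
  assert (HFu : 0 <= F u) by (apply Hpos; lra).
  (* the tangent at [u] and [F(u/2) >= 0] bound the slope: [u F1(u) <= 2 F(u)] *)
  assert (Hslope : u * F1 u <= 2 * F u) by nra.
  destruct (Rle_dec (F1 u) 0) as [Hneg|Hneg]; nra.
Qed.

Lemma g_abs (g : R -> Rbar) (u : R) : (forall v, g (- v) = g v) -> g u = g (Rabs u).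
Proof.
  intros Hsym; destruct (Rle_or_lt 0 u).
  - now rewrite Rabs_pos_eq.
  - now rewrite Rabs_left, Hsym.
Qed.

Lemma prox_sym (g : R -> Rbar) (s q u : R) :
  (forall v, g (- v) = g v) -> in_prox g s q u -> in_prox g s (- q) (- u).
Proof.
  intros Hsym Hp v; specialize (Hp (- v)); unfold prox_obj in *.
  rewrite Hsym in Hp; rewrite Hsym.
  replace ((- u - - q) ^ 2) with ((u - q) ^ 2) by ring.
  replace ((v - - q) ^ 2) with ((- v - q) ^ 2) by ring.
  exact Hp.
Qed.

(* Comparing with [v = 0] shows that [g] is finite at proximal points. *)
Lemma prox_point_finite (g : R -> Rbar) (s q u : R) :
  0 < s -> g 0 = Finite 0 -> B4 g -> in_prox g s q u ->
  exists r, g u = Finite r /\ 0 <= r.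
Proof.
  intros Hs Hg0 HB4 Hp; specialize (Hp 0); specialize (HB4 u).
  unfold prox_obj in Hp; rewrite Hg0 in Hp.
  destruct (g u) as [r| |].
  - now exists r.
  - rewrite Rbar_mult_pos_pinfty in Hp by exact Hs; contradiction.
  - contradiction.
Qed.

Lemma prox_compare (g : R -> Rbar) (s q u v r r' : R) :
  in_prox g s q u -> g u = Finite r -> g v = Finite r' ->
  /2 * (u - q) ^ 2 + s * r <= /2 * (v - q) ^ 2 + s * r'.
Proof. intros Hp Hu Hv; specialize (Hp v); unfold prox_obj in Hp; now rewrite Hu, Hv in Hp. Qed.

Definition prox_gap (g : R -> Rbar) (s d : R) : Prop :=
  forall u q, u <> 0 -> in_prox g s q u -> d <= Rabs u.

Definition q0_admissible (g : R -> Rbar) (s q : R) : Prop :=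
  forall u, Rbar_le (Finite (q * Rabs u))
              (Rbar_plus (Finite (/2 * u ^ 2)) (Rbar_mult (Finite s) (g u))).

(* By oddness of the proximal map, a gap needs only be checked for [u > 0]. *)
Lemma prox_gap_of_pos (g : R -> Rbar) (s d : R) : (forall v, g (- v) = g v) ->
  (forall u q, 0 < u -> in_prox g s q u -> d <= u) -> prox_gap g s d.
Proof.
  intros Hsym Hpos u q Hu Hp; destruct (Rlt_or_le 0 u) as [H0|H0].
  - rewrite Rabs_pos_eq by lra; eauto.
  - rewrite Rabs_left by lra; apply (Hpos (- u) (- q)); [lra|now apply prox_sym].
Qed.

Lemma q0_admissible_of_finite (g : R -> Rbar) (s q : R) : 0 < s -> B4 g ->
  (forall u r, g u = Finite r -> q * Rabs u <= /2 * u ^ 2 + s * r) ->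
  q0_admissible g s q.
Proof.
  intros Hs HB4 Hfin u; specialize (HB4 u); destruct (g u) as [r| |] eqn:Hgu.
  - now apply Hfin.
  - now rewrite Rbar_mult_pos_pinfty.
  - contradiction.
Qed.

(** First regime: the proximal objective is strictly concave near 0. *)

Definition concave_regime (g : R -> Rbar) (s d : R) : Prop :=
  forall v, 0 < v < d -> is_finite (g v) /\ ex_derive (greal g) v /\
    ex_derive (Derive (greal g)) v /\ g2 g v < - / s.

Definition prox_fun (g : R -> Rbar) (s q x : R) : R := /2 * (x - q) ^ 2 + s * greal g x.

Lemma concave_regime_value (g : R -> Rbar) (s d v : R) :
  concave_regime g s d -> B4 g -> 0 < v < d -> g v = Finite (greal g v) /\ 0 <= greal g v.
Proof.
  intros Hreg HB4 Hv; destruct (Hreg v Hv) as [Hfin _]; specialize (HB4 v).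
  unfold greal; rewrite <- Hfin in HB4 |- *; split; [reflexivity|exact HB4].
Qed.

Lemma prox_fun_concave (g : R -> Rbar) (s q d : R) : 0 < s -> concave_regime g s d ->
  strictly_concave_on (prox_fun g s q) (fun x => (x - q) + s * Derive (greal g) x)
    (fun x => 1 + s * g2 g x) 0 d.
Proof.
  intros Hs Hreg v Hv; destruct (Hreg v Hv) as [_ [Hd1 [Hd2 Hg2]]]; split; [|split].
  - apply (is_derive_plus (fun x => /2 * (x - q) ^ 2) (fun x => s * greal g x)).
    + auto_derive; [easy|]; simpl; field.
    + now apply is_derive_scal, Derive_correct.
  - apply (is_derive_plus (fun x => x - q) (fun x => s * Derive (greal g) x)).
    + auto_derive; easy.
    + now apply is_derive_scal, Derive_correct.
  - assert (Hlt : s * g2 g v < s * (- / s)) by (apply Rmult_lt_compat_l; auto).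
    replace (s * - / s) with (-1) in Hlt by (field; lra); lra.
Qed.

(* A proximal point in (0,d) would be an interior minimum of a strictly
   concave function. *)
Lemma prox_gap_of_concave (g : R -> Rbar) (s d : R) : 0 < s ->
  (forall v, g (- v) = g v) -> B4 g -> concave_regime g s d -> prox_gap g s d.
Proof.
  intros Hs Hsym HB4 Hreg; apply prox_gap_of_pos; [exact Hsym|].
  intros u q Hu Hp; apply Rnot_lt_le; intros Hud.
  apply (concave_no_interior_min _ _ _ 0 d (prox_fun_concave g s q d Hs Hreg) u); [lra|].
  intros t Ht; unfold prox_fun; apply (prox_compare g s q u t); [exact Hp|..].
  - now apply (concave_regime_value g s d).
  - now apply (concave_regime_value g s d).
Qed.

(* Near 0 the chord bound gives [s g(w) + w^2/2 >= (d/8) w]; far from 0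
   the quadratic term alone suffices. *)
Lemma admissible_of_concave (g : R -> Rbar) (s d : R) : 0 < s -> 0 < d ->
  (forall v, g (- v) = g v) -> B4 g -> concave_regime g s d ->
  q0_admissible g s (d / 8).
Proof.
  intros Hs Hd Hsym HB4 Hreg; set (A := d / 2).
  apply q0_admissible_of_finite; [exact Hs|exact HB4|]; intros u r Hr.
  assert (Hr0 : 0 <= r) by (specialize (HB4 u); now rewrite Hr in HB4).
  rewrite <- (pow2_abs u); rewrite (g_abs g u Hsym) in Hr; set (w := Rabs u) in *.
  assert (Hw : 0 <= w) by apply Rabs_pos.
  destruct (Rle_or_lt A w) as [Hfar|Hnear]; [unfold A in *; nra|].
  destruct (Req_dec w 0) as [H0|H0]; [rewrite H0; nra|].
  assert (HF : forall v, 0 < v < d -> g v = Finite (greal g v) /\ 0 <= greal g v)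
    by (intros v Hv; now apply (concave_regime_value g s d)).
  assert (Hchord := concave_nonneg_chord _ _ _ d w A (prox_fun_concave g s 0 d Hs Hreg)).
  assert (HFA : A ^ 2 / 2 <= prox_fun g s 0 A).
  { destruct (HF A) as [_ HA]; [unfold A; lra|]; unfold prox_fun; nra. }
  assert (HFw : prox_fun g s 0 w = /2 * w ^ 2 + s * r).
  { destruct (HF w) as [Hgw _]; [unfold A in *; lra|].
    unfold prox_fun; rewrite Hr in Hgw; injection Hgw as <-; ring. }
  assert (w * prox_fun g s 0 A <= 2 * A * prox_fun g s 0 w).
  { apply Hchord; [|lra|lra|unfold A; lra].
    intros v Hv; destruct (HF v Hv) as [_ Hv0]; unfold prox_fun; nra. }
  unfold A in *; nra.
Qed.

(** Second regime: [g] is bounded below by [c > 0] near 0. *)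

Definition bounded_below_regime (g : R -> Rbar) (d c : R) : Prop :=
  forall v, 0 < v < d -> Rbar_le (Finite c) (g v).

(* A small proximal point [u] costs [s g(u) >= s c], which forces the input
   [q >= s c / u] (compare with 0), while comparison with a point [w] where
   [g] is finite bounds [q] from above. *)
Lemma prox_gap_of_bounded_below (g : R -> Rbar) (s d c : R) : 0 < s -> 0 < d -> 0 < c ->
  (forall v, g (- v) = g v) -> B4 g -> g 0 = Finite 0 -> B2 g ->
  bounded_below_regime g d c -> exists d', 0 < d' /\ prox_gap g s d'.
Proof.
  intros Hs Hd Hc Hsym HB4 Hg0 [w0 [Hw0 Hfw0]] Hreg.
  set (w := Rabs w0); assert (Hw : 0 < w) by (apply Rabs_pos_lt, Hw0).
  set (G := real (g w)).
  assert (HgG : g w = Finite G) by (unfold G, w; rewrite <- g_abs by exact Hsym; now rewrite Hfw0).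
  assert (HG : 0 <= G) by (specialize (HB4 w); now rewrite HgG in HB4).
  set (M := /2 * w ^ 2 + s * G); assert (HM : 0 < M) by (unfold M; nra).
  assert (Hd' : 0 < Rmin d (Rmin (w / 2) (s * c * w / (2 * M)))).
  { repeat apply Rmin_pos; try lra.
    apply Rdiv_lt_0_compat; [repeat apply Rmult_lt_0_compat|]; lra. }
  exists (Rmin d (Rmin (w / 2) (s * c * w / (2 * M)))); split; [exact Hd'|].
  apply prox_gap_of_pos; [exact Hsym|]; intros u q Hu Hp.
  apply Rnot_lt_le; intros Hsmall.
  assert (Hud := Rlt_le_trans _ _ _ Hsmall (Rmin_l _ _)).
  assert (Hsmall' := Rlt_le_trans _ _ _ Hsmall (Rmin_r _ _)).
  assert (Huw := Rlt_le_trans _ _ _ Hsmall' (Rmin_l _ _)).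
  assert (Hus := Rlt_le_trans _ _ _ Hsmall' (Rmin_r _ _)).
  destruct (prox_point_finite g s q u Hs Hg0 HB4 Hp) as [r [Hr _]].
  assert (Hcr : c <= r) by (specialize (Hreg u (conj Hu Hud)); now rewrite Hr in Hreg).
  assert (Hvs0 := prox_compare g s q u 0 r 0 Hp Hr Hg0).
  assert (Hvsw := prox_compare g s q u w r G Hp Hr HgG).
  assert (Hqlow : s * c <= u * q) by nra.
  assert (Hq : 0 < q) by nra.
  assert (Hsr : 0 <= s * r) by nra.
  assert (q * (w / 2) <= q * (w - u)) by (apply Rmult_le_compat_l; lra).
  assert (Hqhigh : q * (w / 2) <= M) by (unfold M; nra).
  assert (Hus' : u * (2 * M) < s * c * w).
  { apply (Rmult_lt_compat_r (2 * M)) in Hus; [|lra].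
    unfold Rdiv in Hus; rewrite Rmult_assoc, Rinv_l in Hus by lra; lra. }
  assert (s * c * (w / 2) <= u * q * (w / 2)) by (apply Rmult_le_compat_r; lra).
  assert (u * (q * (w / 2)) <= u * M) by (apply Rmult_le_compat_l; lra).
  lra.
Qed.

(* [q = min(d/2, s c/d)] is admissible: far from 0 by the quadratic term,
   near 0 by the lower bound [g >= c]. *)
Lemma admissible_of_bounded_below (g : R -> Rbar) (s d c : R) : 0 < s -> 0 < d -> 0 < c ->
  (forall v, g (- v) = g v) -> B4 g -> bounded_below_regime g d c ->
  q0_admissible g s (Rmin (d / 2) (s * c / d)).
Proof.
  intros Hs Hd Hc Hsym HB4 Hreg.
  assert (Hq1 := Rmin_l (d / 2) (s * c / d)); assert (Hq2 := Rmin_r (d / 2) (s * c / d)).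
  assert (Hscd : s * c / d * d = s * c) by (field; lra).
  set (q := Rmin (d / 2) (s * c / d)) in *.
  assert (Hq0 : 0 <= q) by (apply Rmin_glb; [lra|apply Rlt_le, Rdiv_lt_0_compat; nra]).
  apply q0_admissible_of_finite; [exact Hs|exact HB4|]; intros u r Hr.
  assert (Hr0 : 0 <= r) by (specialize (HB4 u); now rewrite Hr in HB4).
  rewrite <- (pow2_abs u); rewrite (g_abs g u Hsym) in Hr; set (w := Rabs u) in *.
  assert (Hw : 0 <= w) by apply Rabs_pos.
  destruct (Rle_or_lt d w) as [Hfar|Hnear]; [nra|].
  destruct (Req_dec w 0) as [H0|H0]; [rewrite H0; nra|].
  assert (Hcr : c <= r) by (specialize (Hreg w ltac:(lra)); now rewrite Hr in Hreg).
  assert (q * w <= s * c / d * w) by (apply Rmult_le_compat_r; lra).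
  assert (s * c / d * w <= s * c / d * d).
  { apply Rmult_le_compat_l; [apply Rlt_le, Rdiv_lt_0_compat; nra|lra]. }
  nra.
Qed.

Lemma concave_regime_of_g2_bound (g : R -> Rbar) (s d : R) : 0 < d ->
  twice_diff_near0 g -> (forall v, 0 < v < d -> g2 g v < - / s) ->
  exists d', 0 < d' /\ concave_regime g s d'.
Proof.
  intros Hd [eps [Heps Htd]] Hg2; exists (Rmin d eps); split; [now apply Rmin_pos|].
  intros v Hv; assert (Hl := Rmin_l d eps); assert (Hr := Rmin_r d eps).
  destruct (Htd v ltac:(lra)) as [Hfin [Hd1 Hd2]]; repeat split; auto.
  apply Hg2; lra.
Qed.

Lemma g2_bound_of_limsup (g : R -> Rbar) (l m : R) :
  limsup_right0 (g2 g) = Finite l -> l < m ->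
  exists d, 0 < d /\ forall v, 0 < v < d -> g2 g v < m.
Proof.
  intros Hl Hlm; unfold limsup_right0 in Hl.
  destruct (Rbar_glb_lt_witness _ (Finite m) ltac:(rewrite Hl; exact Hlm))
    as [y [[d [Hd ->]] Hym]].
  exists d; split; [exact Hd|]; intros v Hv.
  refine (Rbar_le_lt_trans (Finite (g2 g v)) _ (Finite m) _ Hym).
  apply Rbar_le_lub_elem; now exists v.
Qed.

Lemma g2_bound_of_limit (g : R -> Rbar) (m : R) :
  filterlim (g2 g) (at_right 0) (Rbar_locally m_infty) ->
  exists d, 0 < d /\ forall v, 0 < v < d -> g2 g v < m.
Proof.
  intros Hlim; destruct (Hlim (fun y => y < m) (ex_intro _ m (fun x Hx => Hx))) as [e He].
  exists e; split; [apply cond_pos|]; intros v Hv; apply He; [|lra].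
  change (Rabs (v - 0) < e); rewrite Rminus_0_r, Rabs_pos_eq; lra.
Qed.

Lemma bounded_below_of_liminf (g : R -> Rbar) : B3c g ->
  exists d c, 0 < d /\ 0 < c /\ bounded_below_regime g d c.
Proof.
  intros Hc; destruct (Rbar_lt_lub_witness _ _ Hc) as [y [[d [Hd ->]] Hy]].
  set (m := Rbar_glb (fun v => exists u, 0 < u < d /\ v = g u)) in Hy.
  assert (Hcy : exists c, 0 < c /\ Rbar_le (Finite c) m).
  { destruct m as [r| |]; simpl in Hy |- *.
    - exists r; split; lra.
    - exists 1; split; [lra|exact I].
    - contradiction. }
  destruct Hcy as [c [Hc0 Hcy]]; exists d, c; split; [|split]; auto.
  intros v Hv; eapply Rbar_le_trans; [exact Hcy|]; apply Rbar_glb_le_elem; now exists v.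
Qed.

(* In case (B3a), [s > s0 = -1/l] means [l < -1/s]. *)
Lemma limsup_below_threshold (s l : R) : 0 < s -> l < 0 -> - / l < s -> l < - / s.
Proof.
  intros Hs Hl Hsl.
  assert (H1 : 1 < s * - l).
  { replace 1 with (- / l * - l) by (field; lra); apply Rmult_lt_compat_r; lra. }
  assert (/ s < - l).
  { apply (Rmult_lt_reg_l s); [exact Hs|]; rewrite Rinv_r by lra; lra. }
  lra.
Qed.

Lemma regime_dichotomy (g : R -> Rbar) (s : R) : AssumptionB g -> 0 < s -> s0 g < s ->
  (exists d, 0 < d /\ concave_regime g s d) \/
  (exists d c, 0 < d /\ 0 < c /\ bounded_below_regime g d c).
Proof.
  intros [_ [_ [HB3 _]]] Hs Hs0; unfold s0 in Hs0.
  destruct (excluded_middle_informative (B3b g \/ B3c g)) as [[[Htd Hlim]|Hc]|Hnot].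
  - left; destruct (g2_bound_of_limit g (- / s) Hlim) as [d [Hd Hg2]].
    now apply (concave_regime_of_g2_bound g s d).
  - right; now apply bounded_below_of_liminf.
  - left; destruct HB3 as [[Htd [l [Hl Hl0]]]|Hbc]; [|contradiction].
    rewrite Hl in Hs0; simpl in Hs0.
    destruct (g2_bound_of_limsup g l (- / s) Hl) as [d [Hd Hg2]];
      [now apply limsup_below_threshold|].
    now apply (concave_regime_of_g2_bound g s d).
Qed.

Lemma gap_and_admissible (g : R -> Rbar) (s : R) : AssumptionB g -> 0 < s -> s0 g < s ->
  (exists d, 0 < d /\ prox_gap g s d) /\ (exists q, 0 < q /\ q0_admissible g s q).
Proof.
  intros HA Hs Hs0; assert (HA' := HA); destruct HA' as [[_ [Hsym Hg0]] [HB2 [_ HB4]]].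
  destruct (regime_dichotomy g s HA Hs Hs0) as [[d [Hd Hreg]]|[d [c [Hd [Hc Hreg]]]]].
  - split; [exists d|exists (d / 8)]; split; try lra.
    + now apply prox_gap_of_concave.
    + now apply admissible_of_concave.
  - split; [now apply (prox_gap_of_bounded_below g s d c)|].
    exists (Rmin (d / 2) (s * c / d)); split.
    + apply Rmin_pos; [lra|apply Rdiv_lt_0_compat; nra].
    + now apply admissible_of_bounded_below.
Qed.

Lemma sigma_ge_gap (g : R -> Rbar) (s d : R) : prox_gap g s d -> Rbar_le (Finite d) (sigma_g g s).
Proof.
  intros Hgap; apply Rbar_le_glb; intros x [u [q [Hu [Hp ->]]]]; exact (Hgap u q Hu Hp).
Qed.

Lemma sigma_le_prox_point (g : R -> Rbar) (s q u : R) : u <> 0 -> in_prox g s q u ->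
  Rbar_le (sigma_g g s) (Finite (Rabs u)).
Proof. intros Hu Hp; apply Rbar_glb_le_elem; now exists u, q. Qed.

Lemma q0_ge_admissible (g : R -> Rbar) (s q : R) : 0 <= q -> q0_admissible g s q ->
  Rbar_le (Finite q) (q0_g g s).
Proof. intros Hq Hadm; apply Rbar_le_lub_elem; now exists q. Qed.

Lemma q0_le_finite_point (g : R -> Rbar) (s w G : R) : w <> 0 -> g w = Finite G ->
  Rbar_le (q0_g g s) (Finite ((/2 * w ^ 2 + s * G) / Rabs w)).
Proof.
  intros Hw HG; assert (Haw : 0 < Rabs w) by now apply Rabs_pos_lt.
  apply Rbar_lub_le; intros x [q [_ [-> Hadm]]]; specialize (Hadm w); rewrite HG in Hadm.
  apply Rmult_le_reg_r with (Rabs w); [exact Haw|].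
  unfold Rdiv; rewrite Rmult_assoc, Rinv_l, Rmult_1_r by lra; exact Hadm.
Qed.

Lemma q0_finite_pos (g : R -> Rbar) (s : R) : B2 g ->
  (exists q, 0 < q /\ q0_admissible g s q) -> exists Q, q0_g g s = Finite Q /\ 0 < Q.
Proof.
  intros [w [Hw Hfin]] [q [Hq Hadm]].
  assert (Hup := q0_le_finite_point g s w (real (g w)) Hw (eq_sym Hfin)).
  assert (Hlow := q0_ge_admissible g s q (Rlt_le _ _ Hq) Hadm).
  destruct (q0_g g s) as [Q| |]; simpl in Hup, Hlow; try contradiction.
  exists Q; split; [reflexivity|lra].
Qed.

(* If [u > 0] is proximal for input [q], then [q0(s) <= q]: comparing with
   [v = 0] gives [u^2/2 + s g(u) <= q u]. *)
Lemma q0_le_prox_input (g : R -> Rbar) (s q u r : R) : g 0 = Finite 0 -> 0 < u ->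
  in_prox g s q u -> g u = Finite r -> Rbar_le (q0_g g s) (Finite q).
Proof.
  intros Hg0 Hu Hp Hr; assert (Hcmp := prox_compare g s q u 0 r 0 Hp Hr Hg0).
  apply Rbar_lub_le; intros x [q' [_ [-> Hadm]]]; specialize (Hadm u); rewrite Hr in Hadm.
  simpl in Hadm |- *; rewrite Rabs_pos_eq in Hadm by lra.
  apply Rmult_le_reg_r with u; nra.
Qed.

(* If [0] is proximal for input [q], then [|q|] is admissible: comparing
   with [v] and [-v] gives [|q v| <= v^2/2 + s g(v)]. *)
Lemma q0_ge_prox_input_at0 (g : R -> Rbar) (s q : R) : 0 < s ->
  (forall v, g (- v) = g v) -> B4 g -> g 0 = Finite 0 -> in_prox g s q 0 ->
  Rbar_le (Finite (Rabs q)) (q0_g g s).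
Proof.
  intros Hs Hsym HB4 Hg0 Hp; apply q0_ge_admissible; [apply Rabs_pos|].
  apply q0_admissible_of_finite; [exact Hs|exact HB4|]; intros v r Hr.
  assert (Hplus := prox_compare g s q 0 v 0 r Hp Hg0 Hr).
  assert (Hminus := prox_compare g s q 0 (- v) 0 r Hp Hg0 ltac:(now rewrite Hsym)).
  rewrite <- Rabs_mult; apply Rabs_le; split; nra.
Qed.

(* The objectives of [G_L(z)] at fixed [u] and of [prox_{g/L}(u + z/L)]
   differ by the factor [L] and a constant. *)
Lemma GL_in_prox (g : R -> Rbar) (L z u : R) : 0 < L -> B4 g -> g 0 = Finite 0 ->
  in_GL g L z u -> in_prox g (/ L) (u + / L * z) u.
Proof.
  intros HL HB4 Hg0 HG v.
  assert (Hs : 0 < / L) by now apply Rinv_0_lt_compat.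
  assert (Hr : exists r, g u = Finite r).
  { specialize (HG 0); specialize (HB4 u); unfold GL_obj in HG; rewrite Hg0 in HG.
    destruct (g u) as [r| |]; [now exists r|contradiction|contradiction]. }
  destruct Hr as [r Hr]; specialize (HG v); specialize (HB4 v).
  unfold prox_obj, GL_obj in *; rewrite Hr in HG |- *.
  destruct (g v) as [rv| |]; [cbn -[pow] in HG |- *|now rewrite Rbar_mult_pos_pinfty|contradiction].
  assert (0 <= / L * ((- z * v + L / 2 * (v - u) ^ 2 + rv) - (- z * u + L / 2 * (u - u) ^ 2 + r)))
    by (apply Rmult_le_pos; lra).
  replace (/ 2 * (v - (u + / L * z)) ^ 2 + / L * rv) with
    (/ 2 * (u - (u + / L * z)) ^ 2 + / L * r
     + / L * ((- z * v + L / 2 * (v - u) ^ 2 + rv) - (- z * u + L / 2 * (u - u) ^ 2 + r)))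
    by (field; lra).
  lra.
Qed.

Theorem corollary4p7 (g : R -> Rbar) (L u z : R) :
  AssumptionB g -> 0 < L -> s0 g < / L -> in_GL g L z u ->
  Rbar_lt (Finite 0) (sigma_g g (/ L)) /\
  Rbar_lt (Finite 0) (q0_g g (/ L)) /\
  (0 < u ->
     Rbar_le (Rbar_max2 (sigma_g g (/ L))
                (Rbar_mult (Finite (/ L))
                   (Rbar_minus (Rbar_mult (Finite L) (q0_g g (/ L))) (Finite z))))
             (Finite u)) /\
  (u < 0 ->
     Rbar_le (Finite u)
             (Rbar_min2 (Rbar_opp (sigma_g g (/ L)))
                (Rbar_opp (Rbar_mult (Finite (/ L))
                   (Rbar_plus (Rbar_mult (Finite L) (q0_g g (/ L))) (Finite z)))))) /\
  (u = 0 -> Rbar_le (Finite (Rabs z)) (Rbar_mult (Finite L) (q0_g g (/ L)))).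
Proof.
  intros HA HL Hs0 HG; assert (Hs : 0 < / L) by now apply Rinv_0_lt_compat.
  destruct (gap_and_admissible g (/ L) HA Hs Hs0) as [[d [Hd Hgap]] Hadm].
  destruct HA as [[_ [Hsym Hg0]] [HB2 [_ HB4]]].
  destruct (q0_finite_pos g (/ L) HB2 Hadm) as [Q [HQ HQ0]].
  assert (Hp := GL_in_prox g L z u HL HB4 Hg0 HG); set (q := u + / L * z) in Hp.
  destruct (prox_point_finite g (/ L) q u Hs Hg0 HB4 Hp) as [r [Hr _]].
  assert (Hsig := sigma_ge_gap g (/ L) d Hgap).
  rewrite HQ; split; [eapply Rbar_lt_le_trans; [|exact Hsig]; simpl; lra|].
  split; [simpl; lra|]; split; [|split].
  - intros Hu; assert (Hsu := sigma_le_prox_point g (/ L) q u ltac:(lra) Hp).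
    assert (HQq := q0_le_prox_input g (/ L) q u r Hg0 Hu Hp Hr); rewrite HQ in HQq.
    rewrite Rabs_pos_eq in Hsu by lra; apply Rbar_max2_le; [exact Hsu|].
    simpl in HQq |- *; unfold q in HQq.
    replace (/ L * (L * Q + - z)) with (Q - / L * z) by (field; lra); lra.
  - intros Hu; assert (Hsu := sigma_le_prox_point g (/ L) q u ltac:(lra) Hp).
    assert (Hp' := prox_sym g (/ L) q u Hsym Hp).
    assert (Hr' : g (- u) = Finite r) by now rewrite Hsym.
    assert (HQq := q0_le_prox_input g (/ L) (- q) (- u) r Hg0 ltac:(lra) Hp' Hr').
    rewrite HQ in HQq; rewrite Rabs_left in Hsu by lra; apply Rbar_le_min2.
    + destruct (sigma_g g (/ L)) as [S| |]; simpl in Hsig, Hsu |- *; try contradiction; lra.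
    + simpl in HQq |- *; unfold q in HQq.
      replace (/ L * (L * Q + z)) with (Q + / L * z) by (field; lra); lra.
  - intros ->; assert (HQq := q0_ge_prox_input_at0 g (/ L) q Hs Hsym HB4 Hg0 Hp).
    rewrite HQ in HQq; simpl in HQq |- *; unfold q in HQq.
    rewrite Rplus_0_l, Rabs_mult, (Rabs_pos_eq (/ L)) in HQq by lra.
    apply (Rmult_le_compat_l L) in HQq; [|lra].
    now rewrite <- Rmult_assoc, Rinv_r, Rmult_1_l in HQq by lra.
Qed.
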